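(* For any special object $L$ of $\mathcal V$, one has $\mathbb O_L(u)=(-1)^t\dfrac{m_L(-u)}{m_L(u)}$.
   Context: Let $\Bbbk$ be a field of characteristic $\neq2$, $t\in\{0,1\}$, and let $\mathcal{NB}_t$ be the nil-Brauer category, here regarded as an ungraded strict $\Bbbk$-linear monoidal category (tensor $\star$, unit $\mathbb1$, composition $\circ$) generated by an object $B$ and morphisms $x:B\to B$, $\tau:B\star B\to B\star B$, $\cap:B\star B\to\mathbb1$, $\cup:\mathbb1\to B\star B$ with relations ($1=1_B$): $\tau\circ\tau=0$; $(\tau\star1)\circ(1\star\tau)\circ(\tau\star1)=(1\star\tau)\circ(\tau\star1)\circ(1\star\tau)$; $\cap\circ\cup=t1_{\mathbb1}$; $(\cap\star1)\circ(1\star\cup)=1=(1\star\cap)\circ(\cup\star1)$; $\cap\circ\tau=0$; $(1\star\cap)\circ(\tau\star1)=(\cap\star1)\circ(1\star\tau)$; $(x\star1)\circ\tau-\tau\circ(1\star x)=1\star1-\cup\circ\cap$; $\cap\circ(1\star x)=-\cap\circ(x\star1)$. Let $\mathcal V$ be a strict $\mathcal{NB}_t$-module category: a $\Bbbk$-linear category with a strict $\Bbbk$-linear monoidal functor $\mu$ from $\mathcal{NB}_t$ to the monoidal category of $\Bbbk$-linear endofunctors of $\mathcal V$ and natural transformations; write $B$ also for $\mu(B)$ and $s_V=\mu(s)_V$. An object $L$ of $\mathcal V$ is special if $\mathrm{End}_{\mathcal V}(L)=\Bbbk$ and $\mathrm{End}_{\mathcal V}(BL)$ is finite-dimensional; $m_L(x)$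 denotes the (monic) minimal polynomial of $x_L:BL\to BL$ (equal to $1$ if $BL=0$). Let $b_r:=\cap\circ(1\star x^r)\circ\cup\in\mathrm{End}(\mathbb1)$ and $\mathbb O(u):=(-1)^t\big(1_{\mathbb1}-2u\sum_{r\ge0}u^{-r-1}b_r\big)\in\mathrm{End}(\mathbb1)[\![u^{-1}]\!]$. For special $L$, $\mu(\mathbb O(u))_L$ acts on $L$ as multiplication by a power series $\mathbb O_L(u)\in\Bbbk[\![u^{-1}]\!]$. *)

From mathcomp Require Import all_boot all_order all_algebra.
Set Implicit Arguments. Unset Strict Implicit. Unset Printing Implicit Defensive.
Import GRing.Theory.
Local Open Scope ring_scope.

Record klincat (k : fieldType) := KLinCat {
  Ob : Type;
  Hom : Ob -> Ob -> lmodType k;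
  comp : forall X Y Z, Hom Y Z -> Hom X Y -> Hom X Z;
  idm : forall X, Hom X X;
  compA : forall X Y Z W (h : Hom Z W) (g : Hom Y Z) (f : Hom X Y),
      comp h (comp g f) = comp (comp h g) f;
  comp1m : forall X Y (f : Hom X Y), comp (idm Y) f = f;
  compm1 : forall X Y (f : Hom X Y), comp f (idm X) = f;
  comp_linl : forall X Y Z (a : k) (g g' : Hom Y Z) (f : Hom X Y),
      comp (a *: g + g') f = a *: comp g f + comp g' f;
  comp_linr : forall X Y Z (a : k) (g : Hom Y Z) (f f' : Hom X Y),
      comp g (a *: f + f') = a *: comp g f + comp g f'
}.
Arguments comp {k C X Y Z} : rename.
Arguments idm {k C} X : rename.
Arguments Hom {k} C : rename.

(* A strict k-linear monoidal functor mu : NB_t -> End(C) is determined *)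
(* by the images of the generators, i.e. a k-linear endofunctor B of C  *)
(* and natural transformations x : B -> B, tau : B B -> B B,            *)
(* cap : B B -> Id, cup : Id -> B B satisfying the defining relations.  *)
(* Convention: mu(X * Y) = mu(X) o mu(Y), so that                       *)
(*   (f * 1_B)_V = f_{BV}    and    (1_B * f)_V = B(f_V).               *)
Record NBmodule (k : fieldType) (t : bool) (C : klincat k) := NBModule {
  Bo : Ob C -> Ob C;
  Bm : forall X Y, Hom C X Y -> Hom C (Bo X) (Bo Y);
  Bm_lin : forall X Y (a : k) (f g : Hom C X Y), Bm (a *: f + g) = a *: Bm f + Bm g;
  Bm_id : forall X, Bm (idm X) = idm (Bo X);
  Bm_comp : forall X Y Z (g : Hom C Y Z) (f : Hom C X Y),
      Bm (comp g f) = comp (Bm g) (Bm f);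
  xB : forall X, Hom C (Bo X) (Bo X);
  tauB : forall X, Hom C (Bo (Bo X)) (Bo (Bo X));
  capB : forall X, Hom C (Bo (Bo X)) X;
  cupB : forall X, Hom C X (Bo (Bo X));
  xB_nat : forall X Y (f : Hom C X Y), comp (xB Y) (Bm f) = comp (Bm f) (xB X);
  tauB_nat : forall X Y (f : Hom C X Y),
      comp (tauB Y) (Bm (Bm f)) = comp (Bm (Bm f)) (tauB X);
  capB_nat : forall X Y (f : Hom C X Y), comp (capB Y) (Bm (Bm f)) = comp f (capB X);
  cupB_nat : forall X Y (f : Hom C X Y), comp (cupB Y) f = comp (Bm (Bm f)) (cupB X);
  rel_tau2 : forall X, comp (tauB X) (tauB X) = 0;
  rel_braid : forall X,
      comp (tauB (Bo X)) (comp (Bm (tauB X)) (tauB (Bo X)))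
      = comp (Bm (tauB X)) (comp (tauB (Bo X)) (Bm (tauB X)));
  rel_bubble : forall X, comp (capB X) (cupB X) = (t%:R : k) *: idm X;
  rel_zig : forall X, comp (capB (Bo X)) (Bm (cupB X)) = idm (Bo X);
  rel_zag : forall X, comp (Bm (capB X)) (cupB (Bo X)) = idm (Bo X);
  rel_captau : forall X, comp (capB X) (tauB X) = 0;
  rel_pitch : forall X,
      comp (Bm (capB X)) (tauB (Bo X)) = comp (capB (Bo X)) (Bm (tauB X));
  rel_dot : forall X,
      comp (xB (Bo X)) (tauB X) - comp (tauB X) (Bm (xB X))
      = idm (Bo (Bo X)) - comp (cupB X) (capB X);
  rel_capdot : forall X,
      comp (capB X) (Bm (xB X)) = - comp (capB X) (xB (Bo X))
}.
Arguments Bo {k t C} _ _.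
Arguments Bm {k t C} _ {X Y} _.
Arguments xB {k t C} _ _.
Arguments tauB {k t C} _ _.
Arguments capB {k t C} _ _.
Arguments cupB {k t C} _ _.

Fixpoint endpow (k : fieldType) (C : klincat k) (X : Ob C) (f : Hom C X X) (n : nat)
  : Hom C X X :=
  match n with 0 => idm X | n'.+1 => comp f (endpow f n') end.

Definition poly_end (k : fieldType) (C : klincat k) (X : Ob C) (p : {poly k})
  (f : Hom C X X) : Hom C X X :=
  \sum_(i < size p) p`_i *: endpow f i.

Definition is_minpoly (k : fieldType) (C : klincat k) (X : Ob C) (f : Hom C X X)
  (m : {poly k}) : Prop :=
  m \is monic /\ poly_end m f = 0 /\
  (forall p : {poly k}, p != 0 -> poly_end p f = 0 -> (size m <= size p)%N).

Definition findim_hom (k : fieldType) (C : klincat k) (X Y : Ob C) : Prop :=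
  exists s : seq (Hom C X Y),
    forall f : Hom C X Y, exists c : nat -> k, f = \sum_(i < size s) c i *: s`_i.

Definition special (k : fieldType) (t : bool) (C : klincat k) (M : NBmodule t C)
  (L : Ob C) : Prop :=
  (idm L != 0 /\ forall f : Hom C L L, exists c : k, f = c *: idm L)
  /\ findim_hom (Bo M L) (Bo M L).

(* component at V of  b_r = cap o (1 * x^r) o cup *)
Definition bubble (k : fieldType) (t : bool) (C : klincat k) (M : NBmodule t C)
  (r : nat) (V : Ob C) : Hom C V V :=
  comp (capB M V) (comp (Bm M (endpow (xB M V) r)) (cupB M V)).

(* component at V of the coefficient of u^{-n} in
   O(u) = (-1)^t (1 - 2u sum_{r>=0} u^{-r-1} b_r) = (-1)^t (1 - 2 sum_r u^{-r} b_r) *)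
Definition Ocoef (k : fieldType) (t : bool) (C : klincat k) (M : NBmodule t C)
  (n : nat) (V : Ob C) : Hom C V V :=
  ((-1) ^+ t : k) *: (((n == 0%N)%:R : k) *: idm V - 2%:R *: bubble M n V).

(* For polynomials P, Q with Q monic and deg P <= deg Q, the series
   sum_n o n u^{-n} in k[[u^{-1}]] equals P(u)/Q(u), i.e.
   (sum_n o n u^{-n}) * Q(u) = P(u).  Writing w = u^{-1} and d = deg Q,
   this is (sum_n o n w^n) * (w^d Q(1/w)) = w^d P(1/w) in k[[w]]. *)
Definition rev_at (k : fieldType) (d : nat) (P : {poly k}) : {poly k} :=
  \poly_(j < d.+1) P`_(d - j).

Definition series_is_ratio (k : fieldType) (o : nat -> k) (P Q : {poly k}) : Prop :=
  forall n : nat,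
    \sum_(i < n.+1) o i * (rev_at (size Q).-1 Q)`_(n - i)
    = (rev_at (size Q).-1 P)`_n.

(* Let beta_n be the scalar by which the bubble b_n acts on L, and y = -x_L.  Bending up
   the right-hand strand of cap o (1 * x^n) o tau gives an endomorphism of BL; sliding the
   dots through tau and the cap shows that it is q_n(y), where
   q_n(u) = sum_(a<n) beta_a u^(n-1-a) - [n odd] u^(n-1).  As m(x_L) = 0, also
   sum_n m_n q_n(y) = 0, a relation of degree < deg m, so sum_n m_n q_n = 0; its coefficients
   are the identities sum_a m_(a+s) beta_a = [s odd] m_s for s > 0, while capping
   m(x_L) x_L^q gives sum_a m_a beta_(a+q) = 0.  With B(u) = sum_n beta_n u^-n these say
   B(u) m(u) = (m(u) - m(-u)) / 2, i.e. O_L(u) m(u) = (-1)^t m(-u). *)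

From Pilot Require Import Defs.
From HB Require Import structures.
From mathcomp Require Import all_boot all_order all_algebra.
From mathcomp Require Import zify ring.
Import GRing.Theory.
Local Open Scope ring_scope.
Set Implicit Arguments. Unset Strict Implicit. Unset Printing Implicit Defensive.

(* Without these, [Hom] and [comp] would refer to vector.v and ssrfun. *)
Local Notation Hom := Defs.Hom.
Local Notation comp := Defs.comp.

Lemma sum_ord_delta (V : nmodType) (F : nat -> V) n (c : nat) :
  \sum_(i < n) F i *+ (i == c :> nat) = F c *+ (c < n)%N.
Proof. by under eq_bigr do rewrite mulrb; rewrite -big_mkcond big_ord1_eq mulrb. Qed.

Lemma coef_compN (R : comNzRingType) (p : {poly R}) i : (p \Po - 'X)`_i = (-1) ^+ i * p`_i.
Proof.
rewrite coef_comp_poly -scaleN1r.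
under eq_bigr => j _ do rewrite exprZn coefZ coefXn mulrA mulr_natr eq_sym.
rewrite (sum_ord_delta (fun j => p`_j * (-1) ^+ j)) [RHS]mulrC.
case: ltnP => // le_p_i.
by rewrite nth_default ?mul0r.
Qed.

Section LinearCategory.
Variables (k : fieldType) (C : klincat k).
Implicit Types X Y Z : Ob C.

Lemma comp_is_linear X Y Z (g : Hom C Y Z) : linear (@comp _ C X Y Z g).
Proof. by move=> a f f'; apply: comp_linr. Qed.
HB.instance Definition _ X Y Z (g : Hom C Y Z) :=
  GRing.isLinear.Build k (Hom C X Y) (Hom C X Z) _ (comp g) (comp_is_linear g).

Definition precomp X Y Z (f : Hom C X Y) (g : Hom C Y Z) : Hom C X Z := comp g f.
Lemma precomp_is_linear X Y Z (f : Hom C X Y) : linear (@precomp X Y Z f).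
Proof. by move=> a g g'; apply: comp_linl. Qed.
HB.instance Definition _ X Y Z (f : Hom C X Y) :=
  GRing.isLinear.Build k (Hom C Y Z) (Hom C X Z) _ (precomp f) (precomp_is_linear f).

Section Precomposition.
Variables (X Y Z : Ob C) (f : Hom C X Y).

Lemma comp0l : comp (0 : Hom C Y Z) f = 0.
Proof. exact: (raddf0 (precomp f)). Qed.
Lemma compNl (g : Hom C Y Z) : comp (- g) f = - comp g f.
Proof. exact: (raddfN (precomp f)). Qed.
Lemma compBl (g g' : Hom C Y Z) : comp (g - g') f = comp g f - comp g' f.
Proof. exact: (raddfB (precomp f)). Qed.
Lemma compZl a (g : Hom C Y Z) : comp (a *: g) f = a *: comp g f.
Proof. exact: (linearZ_LR (precomp f)). Qed.
Lemma comp_suml I (r : seq I) (P : pred I) (G : I -> Hom C Y Z) :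
  comp (\sum_(i <- r | P i) G i) f = \sum_(i <- r | P i) comp (G i) f.
Proof. exact: (raddf_sum (precomp f)). Qed.
End Precomposition.

Lemma endpowD X (f : Hom C X X) a b :
  endpow f (a + b) = comp (endpow f a) (endpow f b).
Proof. by elim: a => [|a IH]; rewrite ?comp1m // addSn /= IH Defs.compA. Qed.

Lemma endpowSr X (f : Hom C X X) n : endpow f n.+1 = comp (endpow f n) f.
Proof. by rewrite -addn1 endpowD /= compm1. Qed.

Lemma endpowN X (f : Hom C X X) n : endpow (- f) n = (-1) ^+ n *: endpow f n.
Proof.
elim: n => [|n IH] /=; first by rewrite scale1r.
by rewrite IH linearZ /= compNl exprS mulN1r scaleNr scalerN.
Qed.

Section PolyEnd.
Variables (X : Ob C) (f : Hom C X X).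

Lemma poly_end_widen (p : {poly k}) n : (size p <= n)%N ->
  poly_end p f = \sum_(i < n) p`_i *: endpow f i.
Proof.
move=> le_p_n; rewrite /poly_end (big_ord_widen _ (fun i => p`_i *: endpow f i) le_p_n).
rewrite big_mkcond; apply: eq_bigr => i _; case: ltnP => // le_p_i.
by rewrite nth_default // scale0r.
Qed.

Lemma poly_endP a (p q : {poly k}) :
  poly_end (a *: p + q) f = a *: poly_end p f + poly_end q f.
Proof.
pose n := (size p + size q)%N.
have le_p : (size p <= n)%N by rewrite leq_addr.
have le_q : (size q <= n)%N by rewrite leq_addl.
have le_pq : (size (a *: p + q)%R <= n)%N.
  by rewrite (leq_trans (size_polyD _ _)) // geq_max le_q (leq_trans (size_scale_leq _ _)).
rewrite !(poly_end_widen le_p, poly_end_widen le_q, poly_end_widen le_pq).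
rewrite scaler_sumr -big_split; apply: eq_bigr => i _.
by rewrite coefD coefZ scalerDl scalerA.
Qed.

Lemma poly_end0 : poly_end 0 f = 0.
Proof. by rewrite /poly_end size_poly0 big_ord0. Qed.
Lemma poly_endZ a (p : {poly k}) : poly_end (a *: p) f = a *: poly_end p f.
Proof. by rewrite -[a *: p]addr0 poly_endP poly_end0 addr0. Qed.
Lemma poly_endD (p q : {poly k}) : poly_end (p + q) f = poly_end p f + poly_end q f.
Proof. by rewrite -[p]scale1r poly_endP !scale1r. Qed.
Lemma poly_endB (p q : {poly k}) : poly_end (p - q) f = poly_end p f - poly_end q f.
Proof. by rewrite poly_endD -[- q]scaleN1r poly_endZ scaleN1r. Qed.
Lemma poly_end_sum I (r : seq I) (P : pred I) (F : I -> {poly k}) :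
  poly_end (\sum_(i <- r | P i) F i) f = \sum_(i <- r | P i) poly_end (F i) f.
Proof. exact: (big_morph (fun p => poly_end p f) poly_endD poly_end0). Qed.

Lemma poly_endXn j : poly_end 'X^j f = endpow f j.
Proof.
rewrite /poly_end size_polyXn big_ord_recr /= coefXn eqxx scale1r big1 ?add0r //.
by move=> i _; rewrite coefXn (ltn_eqF (ltn_ord i)) scale0r.
Qed.

Lemma poly_end_compN (p : {poly k}) : poly_end (p \Po - 'X) f = poly_end p (- f).
Proof.
rewrite /poly_end size_comp_poly2 ?size_opp ?size_polyX //.
by apply: eq_bigr => i _; rewrite coef_compN endpowN scalerA mulrC.
Qed.

Lemma minpoly_annihilator_eq0 (m p : {poly k}) :
  is_minpoly f m -> poly_end p f = 0 -> (size p < size m)%N -> p = 0.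
Proof.
case=> _ [_ m_min] p_f lt_p_m; apply/eqP; apply: contraTT lt_p_m => p_neq0.
by rewrite -leqNgt m_min.
Qed.
End PolyEnd.
End LinearCategory.

Section BubblePolynomials.
Variables (k : fieldType) (beta : nat -> k).

Definition capped_crossing_poly n : {poly k} :=
  \sum_(a < n) beta a *: 'X^(n - a.+1)%N - (odd n)%:R *: 'X^(n.-1).

Lemma coef_capped_crossing_poly n b : (capped_crossing_poly n)`_b =
  beta (n - b.+1) *+ (b < n)%N - (odd n && (n == b.+1))%:R.
Proof.
rewrite coefB coefZ coefXn -natrM mulnb coef_sum.
have -> : odd n && (b == n.-1) = odd n && (n == b.+1).
  by case: n => [|n] //=; rewrite eq_sym.
congr (_ - _); under eq_bigr => a _ do rewrite coefZ coefXn mulr_natr.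
case: (ltnP b n) => [lt_b_n | le_n_b].
  rewrite (eq_bigr (fun a : 'I_n => beta a *+ (a == (n - b.+1)%N :> nat))).
    by rewrite (sum_ord_delta beta) (_ : n - b.+1 < n)%N //; lia.
  move=> a _; have lt_a_n := ltn_ord a.
  by congr (_ *+ nat_of_bool _); apply/eqP/eqP; lia.
rewrite big1 // => a _; rewrite (_ : (b == n - a.+1)%N = false) //.
by apply/eqP; have := ltn_ord a; lia.
Qed.

Definition bubble_defect_poly (m : {poly k}) : {poly k} :=
  \sum_(n < size m) m`_n *: capped_crossing_poly n.

Lemma coef_bubble_defect_poly (m : {poly k}) b : (bubble_defect_poly m)`_b =
  \sum_(n < size m | (b < n)%N) m`_n * beta (n - b.+1) - (odd b.+1)%:R * m`_b.+1.
Proof.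
rewrite coef_sum; under eq_bigr do rewrite coefZ coef_capped_crossing_poly mulrBr.
rewrite sumrB; congr (_ - _).
  by rewrite [RHS]big_mkcond; apply: eq_bigr => n _; rewrite mulrnAr mulrb.
under eq_bigr do rewrite mulr_natr mulrb.
rewrite -big_mkcond (big_ord1_cond_eq _ (fun j => m`_j)).
by case: ltnP => [_|le_m_b]; case: odd; rewrite /= ?mul1r ?mul0r // nth_default.
Qed.

End BubblePolynomials.

Section NBModule.
Variables (k : fieldType) (t : bool) (C : klincat k) (M : NBmodule t C).

HB.instance Definition _ (X Y : Ob C) :=
  GRing.isLinear.Build k (Hom C X Y) (Hom C (Bo M X) (Bo M Y)) _ (@Bm _ _ _ M X Y)
    (@Bm_lin _ _ _ M X Y).

Variable L : Ob C.
Local Notation x := (xB M L).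
Local Notation cap := (capB M L).
Local Notation cup := (cupB M L).
Local Notation tau := (tauB M L).

(* Bending the right-hand strand up: the adjunction bijection Hom(BBL, L) ~ End(BL). *)
Definition mate (h : Hom C (Bo M (Bo M L)) L) : Hom C (Bo M L) (Bo M L) :=
  comp (Bm M h) (cupB M (Bo M L)).

Lemma mate_is_linear : linear mate.
Proof. by move=> a h h'; rewrite /mate linearP comp_linl. Qed.
HB.instance Definition _ :=
  GRing.isLinear.Build k (Hom C (Bo M (Bo M L)) L) (Hom C (Bo M L) (Bo M L)) _ mate
    mate_is_linear.

Lemma mate_comp_Bm h (g : Hom C (Bo M L) (Bo M L)) :
  mate (comp h (Bm M g)) = comp (mate h) g.
Proof. by rewrite /mate Bm_comp -Defs.compA -cupB_nat Defs.compA. Qed.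

Lemma mate_comp_cap (g : Hom C L L) : mate (comp g cap) = Bm M g.
Proof. by rewrite /mate Bm_comp -Defs.compA rel_zag compm1. Qed.

Lemma mate_cap_Bm (g : Hom C (Bo M L) (Bo M L)) : mate (comp cap (Bm M g)) = g.
Proof. by rewrite mate_comp_Bm -[cap]comp1m mate_comp_cap Bm_id comp1m. Qed.

Definition capped_crossing n := comp (comp cap (Bm M (endpow x n))) tau.

Lemma mate_capped_crossing_succ n :
  mate (capped_crossing n.+1) =
  Bm M (bubble M n L) - endpow x n - comp (mate (capped_crossing n)) x.
Proof.
have slide_dots : comp cap (Bm M (endpow x n.+1)) =
    - comp (comp cap (Bm M (endpow x n))) (xB M (Bo M L)).
  rewrite [endpow x n.+1]/= Bm_comp Defs.compA rel_capdot compNl -Defs.compA xB_nat.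
  by rewrite Defs.compA.
have dot_tau : comp (xB M (Bo M L)) tau = comp tau (Bm M x) + (idm _ - comp cup cap).
  by rewrite -(rel_dot M L) addrC subrK.
rewrite /capped_crossing slide_dots compNl -Defs.compA dot_tau linearD linearB /= compm1.
rewrite !Defs.compA -[comp (comp cap _) cup]Defs.compA -/(bubble M n L).
rewrite linearN linearD linearB /= mate_comp_Bm mate_cap_Bm mate_comp_cap.
by rewrite opprD opprB addrC.
Qed.

Lemma sum_mate_capped_crossing_eq0 (p : {poly k}) : poly_end p x = 0 ->
  \sum_(n < size p) p`_n *: mate (capped_crossing n) = 0.
Proof.
move=> p_x; transitivity (mate (comp (comp cap (Bm M (poly_end p x))) tau)).
  rewrite /poly_end !linear_sum comp_suml linear_sum; apply: eq_bigr => n _.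
  by rewrite !linearZ /= compZl linearZ.
by rewrite p_x !linear0 comp0l linear0.
Qed.

Section ScalarBubbles.
Variable beta : nat -> k.
Hypothesis bubbleE : forall n, bubble M n L = beta n *: idm L.

Lemma mate_capped_crossing n :
  mate (capped_crossing n) = poly_end (capped_crossing_poly beta n) (- x).
Proof.
rewrite poly_endB poly_endZ poly_end_sum poly_endXn.
under eq_bigr do rewrite poly_endZ poly_endXn.
elim: n => [|n IH].
  by rewrite big_ord0 /capped_crossing /= Bm_id compm1 rel_captau linear0 scale0r subr0.
set y := - x.
have xE : endpow x n = (-1) ^+ n *: endpow y n.
  by rewrite endpowN scalerA -expr2 sqrr_sign scale1r.
have compxE F : comp F x = - comp F y by rewrite linearN opprK.
have oddS : (odd n.+1)%:R = (-1) ^+ n + (odd n)%:R :> k.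
  by rewrite -signr_odd /=; case: (odd n); rewrite ?expr1 ?addNr ?expr0 ?addr0.
rewrite mate_capped_crossing_succ IH bubbleE linearZ /= Bm_id xE compxE opprK.
rewrite compBl compZl comp_suml -endpowSr big_ord_recr /= subnn oddS scalerDl.
have -> : (odd n)%:R *: endpow y n.-1.+1 = (odd n)%:R *: endpow y n.
  by case: n {IH xE oddS} => [|n]; rewrite ?scale0r.
under eq_bigr => a _ do rewrite compZl -endpowSr.
have -> : \sum_(a < n) beta a *: endpow y (n - a.+1).+1 =
          \sum_(a < n) beta a *: endpow y (n.+1 - a.+1).
  apply: eq_bigr => a _; have := ltn_ord a; rewrite subSS => lt_a_n.
  by congr (_ *: endpow _ _); lia.
by rewrite opprD addrACA [_ + \sum_(a < n) _]addrC.
Qed.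

Variable m : {poly k}.
Hypothesis m_min : is_minpoly x m.

Lemma bubble_defect_poly_eq0 : bubble_defect_poly beta m = 0.
Proof.
have [m_monic [m_x _]] := m_min.
have size_negX : size (- 'X : {poly k}) = 2 by rewrite size_opp size_polyX.
have vanish : poly_end (bubble_defect_poly beta m \Po - 'X) x = 0.
  rewrite poly_end_compN /bubble_defect_poly poly_end_sum.
  rewrite -[RHS](sum_mate_capped_crossing_eq0 m_x).
  by apply: eq_bigr => n _; rewrite poly_endZ mate_capped_crossing.
have small : (size (bubble_defect_poly beta m \Po - 'X) < size m)%N.
  rewrite size_comp_poly2 //.
  have m_gt0 : (0 < size m)%N by rewrite size_poly_gt0 monic_neq0.
  rewrite -(prednK m_gt0) ltnS; apply/leq_sizeP => j le_m_j.
  rewrite coef_bubble_defect_poly big_pred0 => [|n]; last by have := ltn_ord n; lia.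
  by rewrite nth_default ?mulr0 ?subr0 // -(prednK m_gt0).
apply/eqP; rewrite -(comp_poly2_eq0 _ size_negX).
exact/eqP/(minpoly_annihilator_eq0 m_min vanish small).
Qed.

Hypothesis idL_neq0 : idm L != 0.

Lemma bubble_shift_identity q : \sum_(j < size m) m`_j * beta (j + q)%N = 0.
Proof.
have [_ [m_x _]] := m_min.
have : (\sum_(j < size m) m`_j * beta (j + q)%N) *: idm L = 0.
  transitivity (comp cap (comp (Bm M (comp (poly_end m x) (endpow x q))) cup)).
    rewrite /poly_end comp_suml !linear_sum comp_suml linear_sum scaler_suml.
    apply: eq_bigr => j _; rewrite compZl !linearZ /= compZl linearZ /= -endpowD.
    by rewrite -/(bubble M _ L) bubbleE scalerA.
  by rewrite m_x comp0l linear0 comp0l linear0.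
by move/eqP; rewrite scaler_eq0 (negbTE idL_neq0) orbF => /eqP.
Qed.

Lemma bubble_identity s :
  \sum_(j < size m | (s <= j)%N) m`_j * beta (j - s) = (odd s)%:R * m`_s.
Proof.
case: s => [|b].
  rewrite mul0r -[RHS](bubble_shift_identity 0).
  by apply: eq_big => [j|j _]; rewrite ?leq0n ?subn0 ?addn0.
have := congr1 (fun p : {poly k} => p`_b) bubble_defect_poly_eq0.
by rewrite coef_bubble_defect_poly coef0 => /eqP; rewrite subr_eq0 => /eqP.
Qed.
End ScalarBubbles.
End NBModule.

Section BubbleSeries.
Variable k : fieldType.

Lemma coef_rev_at d (p : {poly k}) j : (rev_at d p)`_j = p`_(d - j) *+ (j <= d)%N.
Proof. by rewrite coef_poly ltnS mulrb. Qed.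

Lemma series_is_ratioZ (c : k) (o : nat -> k) (P Q : {poly k}) :
  series_is_ratio o P Q -> series_is_ratio (fun n => c * o n) (c *: P) Q.
Proof.
move=> PQ n; rewrite [RHS]coef_rev_at coefZ -mulrnAr -coef_rev_at -PQ mulr_sumr.
by apply: eq_bigr => i _; rewrite mulrA.
Qed.

Variables (m : {poly k}) (beta : nat -> k).

Lemma conv_rev_at d n :
  \sum_(i < n.+1) beta i * (rev_at d m)`_(n - i) =
  \sum_(j < d.+1 | (d - n <= j)%N) m`_j * beta (j + n - d)%N.
Proof.
pose delta i j := (i + d == j + n)%N.
transitivity (\sum_(i < n.+1) \sum_(j < d.+1) (beta i * m`_j) *+ delta i j).
  apply: eq_bigr => i _; have le_i_n : (i <= n)%N by rewrite -ltnS.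
  rewrite coef_rev_at; case: (leqP (n - i) d) => [le_ni_d | lt_d_ni].
    rewrite (eq_bigr (fun j : 'I_d.+1 => (beta i * m`_j) *+ (j == (d - (n - i))%N :> nat))).
      by rewrite (sum_ord_delta (fun j => beta i * m`_j)) mulrnAr ltnS leq_subr.
    by move=> j _; congr (_ *+ nat_of_bool _); apply/eqP/eqP; lia.
  rewrite mulr0n mulr0 big1 // => j _; rewrite (_ : delta i j = false) //.
  by apply/eqP; have := ltn_ord j; lia.
rewrite exchange_big [RHS]big_mkcond; apply: eq_bigr => j _ /=.
have le_j_d : (j <= d)%N by rewrite -ltnS.
case: leqP => [le_dn_j | lt_j_dn].
  rewrite (eq_bigr (fun i : 'I_n.+1 => (beta i * m`_j) *+ (i == (j + n - d)%N :> nat))).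
    by rewrite (sum_ord_delta (fun i => beta i * m`_j)) ltnS mulrC (_ : j + n - d <= n)%N //; lia.
  by move=> i _; congr (_ *+ nat_of_bool _); apply/eqP/eqP; lia.
rewrite big1 // => i _; rewrite (_ : delta i j = false) //.
by apply/eqP; have := ltn_ord i; lia.
Qed.

Hypothesis m_neq0 : m != 0.
Hypothesis m_beta_odd :
  forall s, \sum_(j < size m | (s <= j)%N) m`_j * beta (j - s)%N = (odd s)%:R * m`_s.
Hypothesis m_beta_shift :
  forall q, \sum_(j < size m) m`_j * beta (j + q)%N = 0.

Lemma series_is_ratio_bubbles :
  series_is_ratio (fun n => (n == 0)%:R - 2%:R * beta n) (m \Po - 'X) m.
Proof.
move=> n; set d := (size m).-1.
have size_m : size m = d.+1 by rewrite prednK // size_poly_gt0.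
under eq_bigr do rewrite mulrBl -mulrA.
rewrite sumrB -mulr_sumr big_ord_recl /= big1 ?addr0 => [|i _]; last by rewrite mul0r.
rewrite conv_rev_at !coef_rev_at coef_compN subn0 -size_m mul1r.
case: (leqP n d) => [le_n_d | lt_d_n].
  rewrite (eq_bigr (fun j : 'I_(size m) => m`_j * beta (j - (d - n))%N)) => [|j le_dn_j].
    rewrite m_beta_odd -signr_odd; case: (odd _) => /=; ring.
  by congr (_ * beta _); lia.
have -> : (d - n = 0)%N by lia.
rewrite (eq_big xpredT (fun j : 'I_(size m) => m`_j * beta (j + (n - d))%N)) => [|//|j _].
  by rewrite m_beta_shift !mulr0n mulr0 subr0.
by congr (_ * beta _); lia.
Qed.
End BubbleSeries.

Theorem theorem3p10 (k : fieldType) (hk2 : (2%:R : k) != 0) (t : bool)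
  (C : klincat k) (M : NBmodule t C) (L : Ob C)
  (hL : special M L)
  (m : {poly k}) (hm : is_minpoly (xB M L) m)
  (o : nat -> k) (ho : forall n : nat, Ocoef M n L = o n *: idm L) :
  series_is_ratio o (((-1) ^+ t : k) *: (m \Po (- 'X))) m.
Proof.
have [[idL_neq0 _] _] := hL.
have [m_monic _] := hm.
pose beta n := ((n == 0)%:R - (-1) ^+ t * o n) / 2%:R.
have oE n : o n = (-1) ^+ t * ((n == 0)%:R - 2%:R * beta n).
  by rewrite /beta [2%:R * _]mulrC divfK // opprB addrC subrK mulrA -expr2 sqrr_sign mul1r.
have bubbleE n : bubble M n L = beta n *: idm L.
  apply: (scalerI hk2); have := congr1 (fun f => (-1) ^+ t *: f) (ho n).
  rewrite /Ocoef scalerA -expr2 sqrr_sign scale1r scalerA => Ocoef_n.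
  by rewrite scalerA mulrC divfK // scalerBl -Ocoef_n opprB addrC subrK.
move=> n; under eq_bigr do rewrite oE.
apply: (series_is_ratioZ _ (series_is_ratio_bubbles _ _ _)) => [|s|q].
- exact: monic_neq0.
- exact: (bubble_identity bubbleE hm idL_neq0).
- exact: (bubble_shift_identity bubbleE hm idL_neq0).
Qed.
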